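(* Let $R$ be a total preorder on $\Omega$ and $B : \Omega \to \mathbb{R}$ a bound. Then $B$ is consistent with $R$ if and only if both of the following hold: $B(\mathbf{x}) \le B(\mathbf{y})$ whenever $\mathbf{x} <_R \mathbf{y}$, and $B(\mathbf{x}) = B(\mathbf{y})$ whenever $\mathbf{x} \sim_R \mathbf{y}$.
   Context: $\Omega$ is a finite set (of samples). A total preorder $R$ on $\Omega$ is a reflexive, transitive relation $\lesssim_R$ such that for all $\mathbf{x},\mathbf{y}$, $\mathbf{x} \lesssim_R \mathbf{y}$ or $\mathbf{y} \lesssim_R \mathbf{x}$; write $\mathbf{x} \sim_R \mathbf{y}$ if both hold and $\mathbf{x} <_R \mathbf{y}$ if $\mathbf{x} \lesssim_R \mathbf{y}$ but not $\mathbf{x} \sim_R \mathbf{y}$. A total order $T$ on $\Omega$ (with $\le_T$, $<_T$) is a total preorder in which $\mathbf{x} \sim_T \mathbf{y}$ implies $\mathbf{x} = \mathbf{y}$. A bound is any function $B : \Omega \to \mathbb{R}$. $B$ is consistent with a total order $T$ if $\mathbf{x} \le_T \mathbf{y}$ implies $B(\mathbf{x}) \le B(\mathbf{y})$. A total order $T$ agrees with a total preorder $R$ if $\mathbf{x} <_R \mathbf{y}$ implies $\mathbf{x} <_T \mathbf{y}$ for all $\mathbf{x},\mathbf{y} \in \Omega$. $B$ is consistent with the preorder $R$ if it is consistent with every total order that agrees with $R$. *)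

From mathcomp Require Import all_boot.
From Stdlib Require Import Reals.
Open Scope R_scope.

Section Defs.
Context {Omega : finType}.

Definition reflexive_rel (le : Omega -> Omega -> Prop) := forall x, le x x.
Definition transitive_rel (le : Omega -> Omega -> Prop) :=
  forall x y z, le x y -> le y z -> le x z.
Definition total_rel (le : Omega -> Omega -> Prop) := forall x y, le x y \/ le y x.

Definition total_preorder (le : Omega -> Omega -> Prop) :=
  reflexive_rel le /\ transitive_rel le /\ total_rel le.

Definition equiv_of (le : Omega -> Omega -> Prop) x y := le x y /\ le y x.
Definition strict_of (le : Omega -> Omega -> Prop) x y := le x y /\ ~ equiv_of le x y.

Definition total_order (le : Omega -> Omega -> Prop) :=
  total_preorder le /\ (forall x y, equiv_of le x y -> x = y).

Definition consistent_with_order (B : Omega -> R) (T : Omega -> Omega -> Prop) :=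
  forall x y, T x y -> B x <= B y.

Definition agrees_with (T R0 : Omega -> Omega -> Prop) :=
  forall x y, strict_of R0 x y -> strict_of T x y.

Definition consistent_with_preorder (B : Omega -> R) (R0 : Omega -> Omega -> Prop) :=
  forall T, total_order T -> agrees_with T R0 -> consistent_with_order B T.
End Defs.

From mathcomp Require Import all_boot.
From Stdlib Require Import Reals Classical.
Open Scope R_scope.

Set Implicit Arguments.
Unset Strict Implicit.

(* A bound consistent with every agreeing total order must be monotone across
   strict steps of R, and also across ties in both directions, since any tie
   x ~ y can be broken either way by refining R lexicographically with a
   suitable total order.  Conversely, a total order agreeing with R never
   reverses a strict step of R, so each of its steps is a strict step or a
   tie of R. *)

Section LexRefinement.
Variable Omega : finType.
Variables R0 tb : Omega -> Omega -> Prop.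
Hypothesis R0_total_preorder : total_preorder R0.
Hypothesis tb_total_order : total_order tb.

Definition lex_refine (x y : Omega) : Prop :=
  strict_of R0 x y \/ (equiv_of R0 x y /\ tb x y).

Lemma total_order_lex_refine : total_order lex_refine.
Proof.
case: R0_total_preorder => R0refl [R0trans R0total].
case: tb_total_order => [[tbrefl [tbtrans tbtotal]] tbanti].
rewrite /lex_refine /strict_of /equiv_of.
split; [split; [|split]|].
- by move=> x; right; split; [split; apply: R0refl | apply: tbrefl].
- move=> x y z [[Rxy nExy] | [[Rxy Ryx] Txy]] [[Ryz nEyz] | [[Ryz Rzy] Tyz]].
  + left; split; first exact: R0trans Rxy Ryz.
    by case=> _ Rzx; apply: nExy; split=> //; exact: R0trans Ryz Rzx.
  + left; split; first exact: R0trans Rxy Ryz.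
    by case=> _ Rzx; apply: nExy; split=> //; exact: R0trans Ryz Rzx.
  + left; split; first exact: R0trans Rxy Ryz.
    by case=> _ Rzx; apply: nEyz; split=> //; exact: R0trans Rzx Rxy.
  + right; split; last exact: tbtrans Txy Tyz.
    by split; [exact: R0trans Rxy Ryz | exact: R0trans Rzy Ryx].
- move=> x y.
  have [Rxy | nRxy] := classic (R0 x y); last first.
    have Ryx : R0 y x by case: (R0total x y).
    by right; left; split=> // -[].
  have [Ryx | nRyx] := classic (R0 y x); last by left; left; split=> // -[].
  by case: (tbtotal x y) => T; [left | right]; right.
- move=> x y [[[Rxy nExy] | [Exy Txy]] [[Ryx nEyx] | [Eyx Tyx]]].
  + by exfalso; apply: nExy; split.
  + by exfalso; apply: nExy; case: Eyx.
  + by exfalso; apply: nEyx; case: Exy.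
  + exact: tbanti.
Qed.

Lemma agrees_with_lex_refine : agrees_with lex_refine R0.
Proof.
move=> x y Sxy; rewrite /strict_of /equiv_of; split; first by left.
by case: Sxy => Rxy nExy [_ [[Ryx _] | [[Ryx _] _]]]; apply: nExy.
Qed.

End LexRefinement.

Lemma total_order_converse (Omega : finType) (T : Omega -> Omega -> Prop) :
  total_order T -> total_order (fun x y => T y x).
Proof.
move=> [[Trefl [Ttrans Ttotal]] Tanti].
split; [split; [|split]|].
- exact: Trefl.
- by move=> x y z Tyx Tzy; exact: Ttrans Tzy Tyx.
- by move=> x y; case: (Ttotal x y); auto.
- by move=> x y [Tyx Txy]; apply: Tanti.
Qed.

Lemma total_order_enum_rank (Omega : finType) :
  total_order (fun x y : Omega => (enum_rank x <= enum_rank y)%nat).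
Proof.
split; [split; [|split]|].
- by move=> x; rewrite /= leqnn.
- by move=> x y z; exact: leq_trans.
- by move=> x y; case: (leqP (enum_rank x) (enum_rank y)) => [|/ltnW]; auto.
- move=> x y [le_xy le_yx]; apply/enum_rank_inj/val_inj/anti_leq.
  by rewrite le_xy le_yx.
Qed.

Lemma exists_total_order_rel (Omega : finType) (x y : Omega) :
  exists T, total_order T /\ T x y.
Proof.
have [le_xy | /ltnW le_yx] := leqP (enum_rank x) (enum_rank y).
- exists (fun a b => (enum_rank a <= enum_rank b)%nat); split => //.
  exact: total_order_enum_rank.
- exists (fun a b => (enum_rank b <= enum_rank a)%nat); split => //.
  exact/total_order_converse/total_order_enum_rank.
Qed.

Lemma agrees_with_rel (Omega : finType) (R0 T : Omega -> Omega -> Prop) x y :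
  total_preorder R0 -> agrees_with T R0 -> T x y -> R0 x y.
Proof.
move=> [_ [_ R0total]] agree Txy; apply: NNPP => nRxy.
have Ryx : R0 y x by case: (R0total x y).
have [Tyx nETyx] := agree y x (conj Ryx (fun E => nRxy (proj2 E))).
exact: nETyx (conj Tyx Txy).
Qed.

Theorem lemma3 (Omega : finType) (R0 : Omega -> Omega -> Prop) (B : Omega -> R) :
  total_preorder R0 ->
  (consistent_with_preorder B R0 <->
   ((forall x y, strict_of R0 x y -> B x <= B y) /\
    (forall x y, equiv_of R0 x y -> B x = B y))).
Proof.
move=> R0tp; split.
- move=> consB.
  have le_lex tb x y : total_order tb -> lex_refine R0 tb x y -> B x <= B y.
    move=> tbto; apply: consB; first exact: total_order_lex_refine.
    exact: agrees_with_lex_refine.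
  have le_tie x y : equiv_of R0 x y -> B x <= B y.
    move=> Exy; have [tb [tbto Txy]] := exists_total_order_rel x y.
    by apply: (le_lex tb) => //; right.
  split=> [x y Sxy | x y [Rxy Ryx]].
  + by apply: (le_lex _ _ _ (total_order_enum_rank Omega)); left.
  + by apply: Rle_antisym; apply: le_tie.
- move=> [le_strict eq_tie] T Tto agree x y Txy.
  have Rxy := agrees_with_rel R0tp agree Txy.
  have [Ryx | nRyx] := classic (R0 y x).
  + by right; apply: eq_tie.
  + by apply: le_strict; split=> // -[].
Qed.
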